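(* Let $(A_i)_{i\in I}$ be any family of finite partially ordered sets, each having a least element $0_i$ and a greatest element $1_i$, and let $A=\prod_{i\in I}A_i$ with the componentwise partial order $\preccurlyeq$. Let $W$ be the set of all up-sets $x$ of $A$ such that, for some natural number $n$ and distinct indices $i_0,\dots,i_{n-1}\in I$, $x$ is the inverse image, under the projection of $A$ onto $A_{i_0}\times\dots\times A_{i_{n-1}}$, of an up-set of that (componentwise ordered) finite product. Then $(A,W)$ is a Pratt comonoid.
   Context: An up-set of a poset $P$ is a subset $x$ with $a\in x$, $a\preccurlyeq b$ implying $b\in x$. A Pratt comonoid is a pair $(A,W)$ where $A$ is a set and $W$ is a set of subsets of $A$ such that (i) $\emptyset\in W$ and $A\in W$; (ii) whenever $C\subseteq A\times A$ is such that for every $a\in A$ both the $a$-th row $\{b\mid (a,b)\in C\}$ and the $a$-th column $\{b\mid (b,a)\in C\}$ belong to $W$ (a crossword over $W$), the diagonal $\{b\mid (b,b)\in C\}$ also belongs to $W$. *)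

From mathcomp Require Import all_boot all_order.
Set Implicit Arguments. Unset Strict Implicit. Unset Printing Implicit Defensive.
Import Order.TTheory.

Definition upset (T : Type) (le : T -> T -> Prop) (x : T -> Prop) : Prop :=
  forall a b, x a -> le a b -> x b.

Definition prod_le (J : Type) (d : J -> Order.disp_t)
    (B : forall j, porderType (d j)) (f g : forall j, B j) : Prop :=
  forall j, (f j <= g j)%O.

Definition pratt_comonoid (A : Type) (W : (A -> Prop) -> Prop) : Prop :=
  [/\ W (fun _ => False), W (fun _ => True) &
      forall C : A -> A -> Prop,
        (forall a, W (fun b => C a b) /\ W (fun b => C b a)) ->
        W (fun b => C b b)].

Definition fin_upsets (I : Type) (d : I -> Order.disp_t)
    (B : forall i, finPOrderType (d i)) (x : (forall i, B i) -> Prop) : Prop :=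
  upset (@prod_le I d (fun i => (B i : porderType (d i)))) x /\
  exists (n : nat) (idx : 'I_n -> I) (U : (forall k : 'I_n, B (idx k)) -> Prop),
    injective idx /\
    upset (@prod_le 'I_n (fun k => d (idx k)) (fun k => (B (idx k) : porderType (d (idx k))))) U /\
    forall a : forall i, B i, x a <-> U (fun k => a (idx k)).

(* The members of W are exactly the up-sets depending on finitely many
   coordinates. The diagonal of a crossword is an up-set, and near any point x
   it depends on finitely many coordinates: if x is on the diagonal, push x
   down to the bottom outside the support of its row, obtaining y with C x y;
   the supports of the row of x and of the column of y then force C a a for
   every a agreeing with x on them (dually, pushing up to the top, if x is off
   the diagonal). A Zorn's lemma argument, i.e. compactness of a product of
   finite discrete spaces, turns this local finite dependence into a global
   one. *)

From mathcomp Require Import all_boot all_order.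
From mathcomp Require Import boolp classical_sets.
Import Order.TTheory.
Set Implicit Arguments. Unset Strict Implicit. Unset Printing Implicit Defensive.
Local Open Scope classical_set_scope.

Section Agreement.
Variables (I : Type) (T : I -> Type).
Implicit Types (F G : seq {classic I}) (a b : forall i, T i).

Definition agree_on F a b := forall i, i \in F -> a i = b i.

Definition determined_by F (D : (forall i, T i) -> Prop) :=
  forall a b, agree_on F a b -> (D a <-> D b).

Definition locally_determined (D : (forall i, T i) -> Prop) :=
  forall x, exists F, forall a, agree_on F a x -> (D a <-> D x).

Definition patch F a b : forall i, T i :=
  fun i : {classic I} => if i \in F then a i else b i.

Lemma agree_on_catl F G a b : agree_on (F ++ G) a b -> agree_on F a b.
Proof. by move=> ab i iF; apply: ab; rewrite mem_cat iF. Qed.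

Lemma agree_on_catr F G a b : agree_on (F ++ G) a b -> agree_on G a b.
Proof. by move=> ab i iG; apply: ab; rewrite mem_cat iG orbT. Qed.

Lemma agree_on_patch F a b : agree_on F (patch F a b) a.
Proof. by move=> i iF; rewrite /patch iF. Qed.

End Agreement.

Section Compactness.
Variables (I : Type) (T : I -> finType) (D : (forall i, T i) -> Prop).

Local Notation point := {classic {i : I & T i}}.

Definition cylinder (l : seq point) (a : forall i, T i) :=
  forall s, s \in l -> a (projT1 s) = projT2 s.

Definition determined_on_cylinder (l : seq point) := exists F : seq {classic I},
  forall a b, cylinder l a -> cylinder l b -> agree_on F a b -> (D a <-> D b).

(* A partial assignment is bad when no finite part of it cuts out a cylinder
   on which [D] depends on finitely many coordinates. *)
Definition bad (A : set point) :=
  forall l, (forall s, s \in l -> A s) -> ~ determined_on_cylinder l.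

Lemma chain_finite_subset (F : set (set point)) (l : seq point) :
    total_on F subset -> (forall s, s \in l -> (\bigcup_(X in F) X) s) ->
  l = [::] \/ exists2 X, F X & forall s, s \in l -> X s.
Proof.
move=> Ftot; elim: l => [|s l IH] sl; first by left.
right; have [Y FY Ys] := sl s (mem_head s l).
have [->|[X FX lX]] := IH (fun t tl => sl t ltac:(by rewrite inE tl orbT)).
  by exists Y => // t; rewrite inE => /eqP ->.
have [XY|YX] := Ftot _ _ FX FY.
  by exists Y => // t; rewrite inE => /orP[/eqP ->|/lX/XY].
by exists X => // t; rewrite inE => /orP[/eqP ->|/lX //]; exact: YX Ys.
Qed.

Lemma bad_bigcup : ~ determined_on_cylinder [::] ->
  forall F : set (set point), F `<=` bad -> total_on F subset ->
  bad (\bigcup_(X in F) X).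
Proof.
move=> nD F Fbad Ftot l lF.
have [->|[X FX lX]] := chain_finite_subset Ftot lF; first exact: nD.
exact: Fbad FX l lX.
Qed.

Lemma maximal_bad_total (A : set point) :
    bad A -> (forall B, A `<` B -> ~ bad B) ->
  forall i, exists v, A (existT _ i v).
Proof.
move=> Abad Amax i; apply: contrapT => /forallNP noi.
have extend v : exists lF : seq point * seq {classic I},
    (forall s, s \in lF.1 -> A s \/ s = existT _ i v) /\
    forall a b, cylinder lF.1 a -> cylinder lF.1 b -> agree_on lF.2 a b ->
      (D a <-> D b).
  have : ~ bad (A `|` [set existT _ i v]).
    apply: Amax; split; first by move=> s As; left.
    by move=> /(_ (existT _ i v)) Av; apply: (noi v); apply: Av; right.
  move=> /existsNP [l /not_implyP [lA /contrapT [F HF]]].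
  by exists (l, F); split => //= s /lA.
have [g gP] := choice extend.
pose l := [seq s <- flatten [seq (g v).1 | v <- enum (T i)] | `[< A s >]].
pose F := (i : {classic I}) :: flatten [seq (g v).2 | v <- enum (T i)].
apply: (Abad l); first by move=> s; rewrite mem_filter => /andP[/asboolP].
exists F => a b al bl ab.
have [gA gD] := gP (a i).
have cyl_g c : cylinder l c -> c i = a i -> cylinder (g (a i)).1 c.
  move=> cl ci s sg; have [As|->] := gA s sg; last by [].
  apply: cl; rewrite mem_filter; apply/andP; split; first exact/asboolP.
  by apply/flatten_mapP; exists (a i); rewrite ?mem_enum.
have abi : b i = a i by symmetry; apply: ab; exact: mem_head.
apply: gD; [exact: cyl_g|exact: cyl_g|] => j jg.
apply: ab; rewrite inE; apply/orP; right.
by apply/flatten_mapP; exists (a i); rewrite ?mem_enum.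
Qed.

Lemma bad_not_total (A : set point) : locally_determined D -> bad A ->
  ~ (forall i, exists v, A (existT _ i v)).
Proof.
move=> Dloc Abad Atot.
pose x i := sval (cid (Atot i)).
have [G HG] := Dloc x.
pose l := [seq (existT _ i (x i) : point) | i : {classic I} <- G].
apply: (Abad l); first by move=> _ /mapP[i _ ->]; exact: svalP (cid (Atot i)).
have agree_x a : cylinder l a -> agree_on G a x.
  by move=> al i iG; apply: (al (existT _ i (x i))); exact: map_f.
exists [::] => a b al bl _.
by rewrite (HG a (agree_x a al)) (HG b (agree_x b bl)).
Qed.

Lemma locally_determined_finitely : locally_determined D ->
  exists F, determined_by F D.
Proof.
move=> Dloc; apply: contrapT => nF.
have nD0 : ~ determined_on_cylinder [::].
  by move=> [F HF]; apply: nF; exists F => a b; exact: HF.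
have [A [Abad Amax]] := Zorn_bigcup (bad_bigcup nD0).
exact: bad_not_total Dloc Abad (maximal_bad_total Abad Amax).
Qed.

End Compactness.

Section FinitelyDeterminedUpsets.
Variables (I : Type) (d : I -> Order.disp_t) (B : forall i, finPOrderType (d i)).

Local Notation le := (@prod_le I d (fun i => (B i : porderType (d i)))).
Implicit Types (X : (forall i, B i) -> Prop) (F : seq {classic I}).

Lemma fin_upsets_determined X : fin_upsets X -> exists F, determined_by F X.
Proof.
move=> [_ [n [idx [U [_ [_ XU]]]]]].
exists [seq (idx k : {classic I}) | k <- enum 'I_n] => a b ab.
rewrite !XU; have -> // : (fun k => a (idx k)) = (fun k => b (idx k)).
  apply: functional_extensionality_dep => k.
  by apply: ab; rewrite map_f ?mem_enum.
Qed.

Lemma determined_upset_fin_upsets F X :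
  upset le X -> determined_by F X -> fin_upsets X.
Proof.
move=> Xup XF; split => //.
pose l := undup F.
pose idx (k : 'I_(size l)) : {classic I} := tnth (in_tuple l) k.
exists (size l), idx, (fun f => exists2 a, X a & forall k, (a (idx k) <= f k)%O).
split; [|split].
- exact: (elimT (tuple_uniqP (in_tuple l)) (undup_uniq F)).
- by move=> f g [a Xa af] fg; exists a => // k; exact: le_trans (af k) (fg k).
move=> a; split=> [Xa|[b Xb ba]]; first by exists a.
have Xba : X (patch l b a).
  by apply: (XF _ b _).2 Xb => i iF; rewrite /patch /l mem_undup iF.
apply: Xup Xba _ => i; rewrite /patch; case: ifP => il //.
have il' : index (i : {classic I}) l < size l by rewrite index_mem.
have idxi : idx (Ordinal il') = i by rewrite /idx (tnth_nth i); exact: nth_index.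
by move: (ba (Ordinal il')); rewrite idxi.
Qed.

End FinitelyDeterminedUpsets.

Section Crossword.
Variables (I : Type) (d : I -> Order.disp_t) (B : forall i, finPOrderType (d i)).
Variables (bot top : forall i, B i).
Hypothesis bot_le : forall i (a : B i), (bot i <= a)%O.
Hypothesis le_top : forall i (a : B i), (a <= top i)%O.

Local Notation le := (@prod_le I d (fun i => (B i : porderType (d i)))).
Local Notation W := (@fin_upsets I d B).

Variable C : (forall i, B i) -> (forall i, B i) -> Prop.
Hypothesis crossword : forall a, W (fun b => C a b) /\ W (fun b => C b a).

Lemma patch_bot_le (F : seq {classic I}) x a :
  agree_on F a x -> le (patch F x bot) a.
Proof. by move=> ax i; rewrite /patch; case: ifP => [/ax ->|]. Qed.

Lemma le_patch_top (F : seq {classic I}) x a :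
  agree_on F a x -> le a (patch F x top).
Proof. by move=> ax i; rewrite /patch; case: ifP => [/ax ->|]. Qed.

Lemma row_upset a : upset le (fun b => C a b).
Proof. exact: (crossword a).1.1. Qed.

Lemma column_upset b : upset le (fun a => C a b).
Proof. exact: (crossword b).2.1. Qed.

Lemma diagonal_upset : upset le (fun b => C b b).
Proof. by move=> a b Caa ab; apply: column_upset (row_upset Caa ab) ab. Qed.

Lemma diagonal_determined_near_mem x : C x x ->
  exists F, forall a, agree_on F a x -> C a a.
Proof.
move=> Cxx; have [F1 row_x] := fin_upsets_determined (crossword x).1.
pose y := patch F1 x bot.
have Cxy : C x y by apply: (row_x y x (agree_on_patch x bot)).2.
have [F2 col_y] := fin_upsets_determined (crossword y).2.
have Czy : C (patch F2 x bot) y by apply: (col_y _ x (agree_on_patch x _)).2.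
exists (F1 ++ F2) => a ax.
apply: row_upset (patch_bot_le (agree_on_catl ax)).
exact: column_upset Czy (patch_bot_le (agree_on_catr ax)).
Qed.

Lemma diagonal_determined_near_nonmem x : ~ C x x ->
  exists F, forall a, agree_on F a x -> ~ C a a.
Proof.
move=> nCxx; have [F1 row_x] := fin_upsets_determined (crossword x).1.
pose y := patch F1 x top.
have nCxy : ~ C x y by move/(row_x y x (agree_on_patch x _)).
have [F2 col_y] := fin_upsets_determined (crossword y).2.
have nCzy : ~ C (patch F2 x top) y.
  by move/(col_y _ x (agree_on_patch x _)).
exists (F1 ++ F2) => a ax Caa; apply: nCzy.
apply: column_upset (le_patch_top (agree_on_catr ax)).
exact: row_upset Caa (le_patch_top (agree_on_catl ax)).
Qed.

Lemma diagonal_locally_determined : locally_determined (fun b => C b b).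
Proof.
move=> x; have [Cxx|nCxx] := pselect (C x x).
  by have [F HF] := diagonal_determined_near_mem Cxx; exists F => a /HF.
by have [F HF] := diagonal_determined_near_nonmem nCxx; exists F => a /HF.
Qed.

Lemma diagonal_fin_upsets : W (fun b => C b b).
Proof.
have [F HF] := locally_determined_finitely diagonal_locally_determined.
exact: determined_upset_fin_upsets diagonal_upset HF.
Qed.

End Crossword.

Theorem theorem9p2 (I : Type) (d : I -> Order.disp_t)
    (B : forall i, finPOrderType (d i))
    (hbot : forall i, exists z : B i, forall a : B i, (z <= a)%O)
    (htop : forall i, exists t : B i, forall a : B i, (a <= t)%O) :
  @pratt_comonoid (forall i, B i) (@fin_upsets I d B).
Proof.
have const_fin_upsets (P : Prop) : fin_upsets (fun _ : forall i, B i => P).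
  by apply: (@determined_upset_fin_upsets _ _ _ [::]).
split; [exact: const_fin_upsets|exact: const_fin_upsets|] => C crossword.
pose bot i := sval (cid (hbot i)); pose top i := sval (cid (htop i)).
exact: (@diagonal_fin_upsets _ _ _ bot top (fun i => svalP (cid (hbot i)))
  (fun i => svalP (cid (htop i))) C crossword).
Qed.
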